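(* Let $X\subset U\subset\mathbb{R}^n$, where $U$ is open and $X$ is closed in $U$. Let $f:X\to\mathbb{R}$, let $p\in\mathbb{N}$, and suppose there is a $\mathcal{C}^p$ Whitney field $F=(F^\alpha)_{|\alpha|\le p}$ on $X$ with $F^0=f$. Then for each $i\in\mathbb{N}$, $\rho^i(\Phi_0)$ is the graph of a function $\rho^i(E_0)\to\mathbb{R}$ (i.e. for each $a\in X$ and $\xi\in\rho^i(E_0)_a$ there is exactly one $\lambda$ with $(a,\xi,\lambda)\in\rho^i(\Phi_0)$), and if $a\in X$ and $\xi\in\rho^i(E_0)_a$, then the value of this function at $\xi$ equals $\xi(T^p_aF)=\xi(F,a)$.
   Context: $\mathcal{P}_p$: real polynomials on $\mathbb{R}^n$ of degree $\le p$; $\mathcal{P}_p^*$ its dual. For $\xi\in\mathcal{P}_p^*$, $b\in\mathbb{R}^n$, $|\alpha|\le p$: $\xi_\alpha(b):=\xi(\tfrac1{\alpha!}(x-b)^\alpha)$; $\delta_a(P)=P(a)$. A bundle over $X$ with fibres in $W$ is a subset of $X\times W$ whose fibres are linear subspaces. For a bundle $E\subset X\times\mathcal{P}_p^*$: $\Delta E=\{(a,b,\xi+\eta):a,b\in X,\xi\in E_a,\eta\in E_b,|a-b|^{p-|\alpha|}|\eta_\alpha(b)|\le1\ \forall|\alpha|\le p\}$, $E'=\{(a,\xi):(a,a,\xi)\in\overline{\Delta E}\}$ (closure in $X\times X\times\mathcal{P}_p^*$), $\rho(E)=\{(a,\xi):\xi\in\operatorname{Span}E'_a\}$. For a bundle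 $\Phi\subset X\times(\mathcal{P}_p^*\times\mathbb{R})$: $\Delta\Phi=\{(a,b,\xi+\eta,\lambda+\mu):a,b\in X,(\xi,\lambda)\in\Phi_a,(\eta,\mu)\in\Phi_b,|a-b|^{p-|\alpha|}|\eta_\alpha(b)|\le1\ \forall|\alpha|\le p\}$, $\Phi'=\{(a,\xi,\lambda):(a,a,\xi,\lambda)\in\overline{\Delta\Phi}\}$, $\rho(\Phi)=\{(a,v):v\in\operatorname{Span}\Phi'_a\}$. $E_0=\{(a,\lambda\delta_a):a\in X,\lambda\in\mathbb{R}\}$, $\Phi_0=\{(a,\lambda\delta_a,\lambda f(a)):a\in X,\lambda\in\mathbb{R}\}$. For $F=(F^\alpha)_{|\alpha|\le p}$, $F^\alpha:X\to\mathbb{R}$: $T^p_aF(x)=\sum_{|\alpha|\le p}\frac1{\alpha!}F^\alpha(a)(x-a)^\alpha$, $\xi(F,a)=\xi(T^p_aF)$, and $\delta_\alpha(a,b)=\big(F^\alpha(b)-\sum_{|\beta|\le p-|\alpha|}\frac1{\beta!}F^{\alpha+\beta}(a)(b-a)^\beta\big)/|b-a|^{p-|\alpha|}$; $F$ is a $\mathcal{C}^p$ Whitney field if for every $c\in X$, $|\alpha|\le p$, $\delta_\alpha(a,b)\to0$ as $a,b\to c$ in $X$, $a\ne b$. *)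

From HB Require Import structures.
From mathcomp Require Import all_boot all_algebra.
From mathcomp Require Import reals.
From mathcomp Require Import mpoly.
Set Implicit Arguments.
Unset Strict Implicit.
Import GRing.Theory Num.Theory.
Local Open Scope ring_scope.

Section Whitney.
Variable R : realType.
Variables n p : nat.

Definition pt := 'I_n -> R.
Definition midx := 'X_{1..n < p.+1}.
(* P_p^* : a functional xi is recorded by its values xi(x^alpha) on the
   monomial basis x^alpha, |alpha| <= p, of P_p *)
Definition dual := {ffun midx -> R}.

Definition normR (x : pt) : R := Num.sqrt (\sum_i (x i) ^+ 2).
Definition distR (x y : pt) : R := normR (fun i => x i - y i).

Definition mfact (m : 'X_{1..n}) : R := (\prod_(i < n) (m i)`!)%:R.
Definition shiftmono (b : pt) (m : 'X_{1..n}) : {mpoly R[n]} :=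
  \prod_(i < n) ('X_i - (b i)%:MP) ^+ (m i).
Definition pairing (xi : dual) (P : {mpoly R[n]}) : R :=
  \sum_(m : midx) xi m * P@_(val m).
Definition xi_at (xi : dual) (m : midx) (b : pt) : R :=
  pairing xi ((mfact (val m))^-1 *: shiftmono b (val m)).
Definition delta (a : pt) : dual := [ffun m : midx => ('X_[val m] : {mpoly R[n]}).@[a]].

Definition span (S : dual -> Prop) (xi : dual) : Prop :=
  exists k (v : 'I_k -> dual) (c : 'I_k -> R),
    (forall i, S (v i)) /\ forall m, xi m = \sum_(i < k) c i * v i m.
Definition spanP (S : dual -> R -> Prop) (xi : dual) (l : R) : Prop :=
  exists k (v : 'I_k -> dual) (w : 'I_k -> R) (c : 'I_k -> R),
    (forall i, S (v i) (w i)) /\ (forall m, xi m = \sum_(i < k) c i * v i m)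
    /\ l = \sum_(i < k) c i * w i.

Definition nearcond (a b : pt) (eta : dual) : Prop :=
  forall m : midx, distR a b ^+ (p - mdeg (val m)) * `|xi_at eta m b| <= 1.

Variable X : pt -> Prop.

Definition bundleE := pt -> dual -> Prop.
Definition bundlePhi := pt -> dual -> R -> Prop.

Definition DeltaE (E : bundleE) (a b : pt) (z : dual) : Prop :=
  X a /\ X b /\ exists xi eta, E a xi /\ E b eta /\ nearcond a b eta /\ z = xi + eta.
Definition DeltaPhi (Phi : bundlePhi) (a b : pt) (z : dual) (t : R) : Prop :=
  X a /\ X b /\ exists xi l eta mu, Phi a xi l /\ Phi b eta mu /\ nearcond a b eta
    /\ z = xi + eta /\ t = l + mu.

Definition closure3 (S : pt -> pt -> dual -> Prop) (a b : pt) (z : dual) : Prop :=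
  X a /\ X b /\ forall eps : R, 0 < eps -> exists a' b' z', S a' b' z' /\
    distR a a' < eps /\ distR b b' < eps /\ (forall m, `|z m - z' m| < eps).
Definition closure4 (S : pt -> pt -> dual -> R -> Prop) (a b : pt) (z : dual) (t : R)
  : Prop :=
  X a /\ X b /\ forall eps : R, 0 < eps -> exists a' b' z' t', S a' b' z' t' /\
    distR a a' < eps /\ distR b b' < eps /\ (forall m, `|z m - z' m| < eps)
    /\ `|t - t'| < eps.

Definition Eprime (E : bundleE) : bundleE := fun a xi => closure3 (DeltaE E) a a xi.
Definition Phiprime (Phi : bundlePhi) : bundlePhi :=
  fun a xi l => closure4 (DeltaPhi Phi) a a xi l.

Definition rhoE (E : bundleE) : bundleE := fun a xi => X a /\ span (Eprime E a) xi.
Definition rhoPhi (Phi : bundlePhi) : bundlePhi :=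
  fun a xi l => X a /\ spanP (Phiprime Phi a) xi l.

Definition E0 : bundleE := fun a xi => X a /\ exists l : R, forall m, xi m = l * delta a m.
Definition Phi0 (f : pt -> R) : bundlePhi :=
  fun a xi t => X a /\ exists l : R, (forall m, xi m = l * delta a m) /\ t = l * f a.

(* Whitney fields F = (F^alpha); components with |alpha| > p are ignored *)
Definition Fjet := 'X_{1..n} -> pt -> R.

Definition taylor (F : Fjet) (a : pt) : {mpoly R[n]} :=
  \sum_(m : midx) (F (val m) a * (mfact (val m))^-1) *: shiftmono a (val m).

Definition whitney_delta (F : Fjet) (m : midx) (a b : pt) : R :=
  (F (val m) b - \sum_(k : midx | (mdeg (val m) + mdeg (val k) <= p)%N)
        F (val m + val k)%MM a * (mfact (val k))^-1
          * \prod_(i < n) (b i - a i) ^+ (val k i))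
  / distR a b ^+ (p - mdeg (val m)).

Definition whitney_field (F : Fjet) : Prop :=
  forall c, X c -> forall m : midx, forall eps : R, 0 < eps ->
    exists del : R, 0 < del /\ forall a b, X a -> X b -> a <> b ->
      distR a c < del -> distR b c < del -> `|whitney_delta F m a b| < eps.

End Whitney.

Definition is_openR (R : realType) (n : nat) (U : pt R n -> Prop) : Prop :=
  forall a, U a -> exists eps : R, 0 < eps /\ forall b, distR a b < eps -> U b.

Definition rel_closedR (R : realType) (n : nat) (U X : pt R n -> Prop) : Prop :=
  forall a, U a -> (forall eps : R, 0 < eps -> exists b, X b /\ distR a b < eps) -> X a.

(* The graph property is preserved by linear spans, and also by the closures defining
   E' and Phi', because (a, b, xi, eta) |-> xi(T_a F) + eta(T_b F) on Delta E extends
   continuously to the diagonal: re-expanding T_a F around b gives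
   eta(T_b F) - eta(T_a F) = sum_alpha (F^alpha(b) - D^alpha(T_a F)(b)) eta_alpha(b),
   and the constraint |a - b|^(p - |alpha|) |eta_alpha(b)| <= 1 of Delta E makes this as
   small as the Whitney remainders. *)

From Pilot Require Import Defs.
From HB Require Import structures.
From mathcomp Require Import all_boot all_order all_algebra.
From mathcomp Require Import reals.
From mathcomp Require Import mpoly.
From mathcomp Require Import ring lra.
Set Implicit Arguments.
Unset Strict Implicit.
Unset Printing Implicit Defensive.
Import Order.TTheory GRing.Theory Num.Theory.
Local Open Scope ring_scope.

Section BoundedMultinomials.
Variables n p : nat.
Local Notation midx := (midx n p).

Lemma mnm_le_mdeg (m : 'X_{1..n}) i : (m i <= mdeg m)%N.
Proof. by rewrite mdegE (bigD1 i) //= leq_addr. Qed.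

Lemma midx_mdeg_le (a : midx) : (mdeg (val a) <= p)%N.
Proof. by rewrite -ltnS; apply: bmdeg. Qed.

Lemma midx_le (a : midx) i : (val a i <= p)%N.
Proof. exact: leq_trans (mnm_le_mdeg _ i) (midx_mdeg_le a). Qed.

Definition midx_of (m : 'X_{1..n}) : midx := insubd bm0 m.

Lemma midx_ofK m : (mdeg m <= p)%N -> val (midx_of m) = m.
Proof. by move=> hm; rewrite /midx_of insubdK. Qed.

Lemma midx_of_out m : ~~ (mdeg m <= p)%N -> midx_of m = bm0.
Proof. by move=> hm; apply: val_inj; rewrite /midx_of val_insubd ltnS (negbTE hm). Qed.

End BoundedMultinomials.

Arguments midx_of {n p} m.

Section MultinomialExpansion.
Variables (A : comPzRingType) (n p : nat).
Local Notation midx := (midx n p).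

Lemma exprD_bounded (Y c : A) (g : nat) : (g <= p)%N ->
  (Y + c) ^+ g = \sum_(j < p.+1) 'C(g, j)%:R * c ^+ (g - j) * Y ^+ j.
Proof.
move=> hg; rewrite addrC exprDn.
rewrite (big_ord_widen p.+1 (fun j => c ^+ (g - j) * Y ^+ j *+ 'C(g, j))) //.
rewrite big_mkcond /=; apply: eq_bigr => j _; case: ifP => hj.
  by rewrite -mulr_natl mulrA.
by rewrite bin_small ?mulr0n ?mul0r // ltnNge -ltnS hj.
Qed.

Lemma prod_exprD_midx (Y c : 'I_n -> A) (g : 'X_{1..n}) : (mdeg g <= p)%N ->
  \prod_(i < n) (Y i + c i) ^+ g i =
  \sum_(a : midx) \prod_(i < n) ('C(g i, val a i)%:R * c i ^+ (g i - val a i) * Y i ^+ val a i).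
Proof.
move=> hg.
pose G i (j : nat) := 'C(g i, j)%:R * c i ^+ (g i - j) * Y i ^+ j.
rewrite (eq_bigr (fun i => \sum_(j < p.+1) G i j)); last first.
  by move=> i _; apply: exprD_bounded; apply: leq_trans hg; apply: mnm_le_mdeg.
rewrite bigA_distr_bigA /=.
pose phi (a : midx) : {ffun 'I_n -> 'I_p.+1} := [ffun i => inord (val a i)].
pose h (f : {ffun 'I_n -> 'I_p.+1}) : midx := midx_of [multinom (f i : nat) | i < n].
have phiK : forall f, phi (h f) = f -> forall i, (f i : nat) = val (h f) i.
  by move=> f hf i; rewrite -{1}hf ffunE inordK // ltnS midx_le.
rewrite (reindex_onto h phi (P := xpredT)) /=; last first.
  move=> a _; apply: val_inj.
  have phiE : [multinom (phi a i : nat) | i < n] = val a.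
    by apply/mnmP => i; rewrite mnmE ffunE inordK // ltnS midx_le.
  by rewrite /h phiE midx_ofK // midx_mdeg_le.
(* Only the [f] bounded pointwise by [g] contribute, and those all come from [midx]. *)
rewrite [LHS](bigID (fun f => phi (h f) == f)) /= [X in _ + X]big1 ?addr0.
  by apply: eq_bigr => f /eqP /phiK hf; apply: eq_bigr => i _; rewrite hf.
move=> f hf; case: (boolP [forall i, f i <= g i]%N) => [/forallP le_fg | /forallPn [i lt_gf]].
  have hd : (mdeg [multinom (f i : nat) | i < n] <= p)%N.
    by apply: leq_trans hg; rewrite !mdegE; apply: leq_sum => j _; rewrite mnmE.
  case/eqP: hf; apply/ffunP => i; apply: val_inj.
  by rewrite ffunE /= /h midx_ofK // mnmE inordK.
by rewrite (bigD1 i) //= /G bin_small ?mul0r // ltnNge.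
Qed.

End MultinomialExpansion.

Section TaylorPolynomials.
Variables (R : realType) (n p : nat).
Local Notation midx := (midx n p).
Local Notation pt := (pt R n).

Lemma shiftmono_recenter (x y : pt) (g : midx) : shiftmono x (val g) =
  \sum_(a : midx) (\prod_(i < n) ('C(val g i, val a i)%:R * (y i - x i) ^+ (val g i - val a i)))
     *: shiftmono y (val a).
Proof.
rewrite /shiftmono (eq_bigr (fun i => ('X_i - (y i)%:MP + (y i - x i)%:MP) ^+ val g i)); last first.
  by move=> i _; rewrite rmorphB /= addrA subrK.
rewrite (@prod_exprD_midx _ n p) ?midx_mdeg_le //; apply: eq_bigr => a _.
rewrite big_split /= -mul_mpolyC rmorph_prod; congr (_ * _); apply: eq_bigr => i _.
by rewrite rmorphM rmorph_nat rmorphXn.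
Qed.

(* [taylor_deriv F x y a] is the derivative [D^a (T^p_x F)] evaluated at [y]. *)
Definition taylor_deriv (F : Fjet R n) (x y : pt) (a : midx) : R :=
  \sum_(k : midx | (mdeg (val a) + mdeg (val k) <= p)%N)
        F (val a + val k)%MM x * (mfact R (val k))^-1
          * \prod_(i < n) (y i - x i) ^+ (val k i).

Lemma whitney_deltaE (F : Fjet R n) (a : midx) (x y : pt) :
  whitney_delta F a x y = (F (val a) y - taylor_deriv F x y a) / distR x y ^+ (p - mdeg (val a)).
Proof. by []. Qed.

Lemma mfact_neq0 (m : 'X_{1..n}) : mfact R m != 0.
Proof. by rewrite pnatr_eq0 -lt0n prodn_gt0 // => i; apply: fact_gt0. Qed.

Lemma mfactD (a k : 'X_{1..n}) : mfact R (a + k)%MM =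
  (\prod_(i < n) 'C(a i + k i, a i))%:R * mfact R a * mfact R k.
Proof.
rewrite /mfact -!natrM -!big_split /=; congr (_%:R); apply: eq_bigr => i _.
by rewrite mnmDE -mulnA -(bin_fact (leq_addr (k i) (a i))) addKn.
Qed.

Lemma taylor_recenter_coef (F : Fjet R n) (x y : pt) (a : midx) :
  \sum_(g : midx) F (val g) x * (mfact R (val g))^-1 *
     \prod_(i < n) ('C(val g i, val a i)%:R * (y i - x i) ^+ (val g i - val a i))
  = taylor_deriv F x y a * (mfact R (val a))^-1.
Proof.
rewrite /taylor_deriv mulr_suml.
rewrite (bigID (fun g : midx => (val a <= val g)%MM)) /= [X in _ + X]big1 ?addr0; last first.
  move=> g; rewrite /lem => /forallPn [i lt_ga].
  by rewrite (bigD1 i) //= bin_small ?mul0r ?mulr0 // ltnNge.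
rewrite (reindex_onto (fun k : midx => midx_of (val a + val k))
                     (fun g : midx => midx_of (val g - val a))) /=; last first.
  move=> g le_ag; apply: val_inj.
  rewrite (midx_ofK (leq_trans (mdegB _ _) (midx_mdeg_le g))) addmC submK //.
  by rewrite midx_ofK // midx_mdeg_le.
rewrite (eq_bigl (fun k : midx => (mdeg (val a) + mdeg (val k) <= p)%N)); last first.
  move=> k /=; case: (leqP (mdeg (val a) + mdeg (val k)) p) => hk.
    rewrite midx_ofK ?mdegD // lem_addr /= addmC addmK.
    by apply/eqP; apply: val_inj; rewrite midx_ofK // midx_mdeg_le.
  rewrite midx_of_out ?mdegD -?ltnNge //; apply/negbTE/negP => /andP [ha /eqP hk2].
  have a0 : val a = 0%MM.
    by apply/mnmP => i; move/mnm_lepP: ha => /(_ i); rewrite mnm0E leqn0 => /eqP.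
  have k0 : mdeg (val k) = 0%N.
    rewrite -hk2 midx_ofK; last by rewrite (leq_trans (mdegB _ _)) // midx_mdeg_le.
    by rewrite a0 subm0 mdeg0.
  by move: hk; rewrite a0 k0 mdeg0.
apply: eq_bigr => k hk; rewrite midx_ofK ?mdegD // big_split /= mfactD.
under [X in _ * (X * _) = _]eq_bigr => i _ do rewrite mnmDE.
under [X in _ * (_ * X) = _]eq_bigr => i _ do rewrite mnmDE addKn.
rewrite -natr_prod.
have hC : (\prod_(i < n) 'C(val a i + val k i, val a i))%:R != 0 :> R.
  by rewrite pnatr_eq0 -lt0n prodn_gt0 // => i; rewrite bin_gt0 leq_addr.
by field; rewrite hC !mfact_neq0.
Qed.

Lemma taylor_recenter (F : Fjet R n) (x y : pt) : taylor p F x =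
  \sum_(a : midx) (taylor_deriv F x y a * (mfact R (val a))^-1) *: shiftmono y (val a).
Proof.
rewrite /taylor.
under eq_bigr => g _ do rewrite (shiftmono_recenter x y g) scaler_sumr.
under eq_bigr => g _ do under eq_bigr => a _ do rewrite scalerA.
rewrite exchange_big /=; apply: eq_bigr => a _.
by rewrite -scaler_suml taylor_recenter_coef.
Qed.

End TaylorPolynomials.

Section Pairing.
Variables (R : realType) (n p : nat).
Local Notation midx := (midx n p).
Local Notation mpR := {mpoly R[n]}.
Local Notation dual := (dual R n p).
Local Notation pt := (pt R n).

Lemma pairingD (xi : dual) (P Q : mpR) : pairing xi (P + Q) = pairing xi P + pairing xi Q.
Proof. by rewrite /pairing -big_split; apply: eq_bigr => m _; rewrite mcoeffD mulrDr. Qed.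

Lemma pairingZ (xi : dual) c (P : mpR) : pairing xi (c *: P) = c * pairing xi P.
Proof. by rewrite /pairing mulr_sumr; apply: eq_bigr => m _; rewrite mcoeffZ mulrCA. Qed.

Lemma pairing0 (xi : dual) : pairing xi 0 = 0.
Proof. by rewrite -(scale0r 0) pairingZ mul0r. Qed.

Lemma pairingB (xi : dual) (P Q : mpR) : pairing xi (P - Q) = pairing xi P - pairing xi Q.
Proof. by rewrite pairingD -scaleN1r pairingZ mulN1r. Qed.

Lemma pairing_sum (xi : dual) (I : Type) (r : seq I) (P : pred I) (G : I -> mpR) :
  pairing xi (\sum_(i <- r | P i) G i) = \sum_(i <- r | P i) pairing xi (G i).
Proof. exact: (big_morph _ (pairingD xi) (pairing0 xi)). Qed.

Lemma pairingDl (xi eta : dual) (P : mpR) :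
  pairing (xi + eta) P = pairing xi P + pairing eta P.
Proof. by rewrite /pairing -big_split; apply: eq_bigr => m _; rewrite ffunE mulrDl. Qed.

Lemma pairing_lincombl (xi : dual) k (v : 'I_k -> dual) (c : 'I_k -> R) (P : mpR) :
  (forall m, xi m = \sum_(i < k) c i * v i m) ->
  pairing xi P = \sum_(i < k) c i * pairing (v i) P.
Proof.
move=> xiE; rewrite /pairing.
under eq_bigr => m _ do rewrite xiE mulr_suml.
rewrite exchange_big; apply: eq_bigr => i _.
by rewrite mulr_sumr; apply: eq_bigr => m _; rewrite mulrA.
Qed.

Lemma pairingZl (xi eta : dual) l (P : mpR) : (forall m, xi m = l * eta m) ->
  pairing xi P = l * pairing eta P.
Proof. by move=> xiE; rewrite /pairing mulr_sumr; apply: eq_bigr => m _; rewrite xiE mulrA. Qed.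

Lemma pairingX (xi : dual) (b : midx) : pairing xi 'X_[val b] = xi b.
Proof.
rewrite /pairing (bigD1 b) //= mcoeffX eqxx mulr1 big1 ?addr0 // => m hm.
by rewrite mcoeffX (inj_eq val_inj) eq_sym (negbTE hm) mulr0.
Qed.

Lemma pairing_taylorB (F : Fjet R n) (x y : pt) (z : dual) :
  pairing z (taylor p F y) - pairing z (taylor p F x) =
  \sum_(a : midx) (F (val a) y - taylor_deriv F x y a) * xi_at z a y.
Proof.
rewrite (taylor_recenter p F x y) {1}/taylor -pairingB -sumrB pairing_sum.
by apply: eq_bigr => a _; rewrite -scalerBl -mulrBl -scalerA pairingZ.
Qed.

Lemma shiftmono_origin (m : 'X_{1..n}) : shiftmono (fun _ => 0 : R) m = 'X_[m].
Proof. by rewrite /shiftmono mpolyXE_id; apply: eq_bigr => i _; rewrite mpolyC0 subr0. Qed.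

Lemma taylor_eval (F : Fjet R n) (a : pt) : (taylor p F a).@[a] = F 0%MM a.
Proof.
rewrite /taylor raddf_sum /= (bigD1 (@bm0 n p)) //= big1 ?addr0.
  rewrite mevalZ /shiftmono big1 ?meval1 ?mulr1; last by move=> i _; rewrite mnm0E expr0.
  by rewrite /mfact big1 ?invr1 ?mulr1 // => i _; rewrite mnm0E fact0.
move=> b hb; rewrite mevalZ /shiftmono rmorph_prod /=.
have [i hi] : exists i, val b i != 0%N.
  apply/existsP; apply: contraR hb => /existsPn b0; apply/eqP/val_inj/mnmP => i.
  by rewrite mnm0E; apply/eqP/negPn/b0.
rewrite (bigD1 i) //= rmorphXn /= mevalB mevalXU mevalC subrr expr0n.
by rewrite (negbTE hi) mul0r mulr0.
Qed.

Lemma pairing_delta_taylor (F : Fjet R n) (a : pt) :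
  pairing (delta p a) (taylor p F a) = F 0%MM a.
Proof.
(* Recentred at the origin, [T a] is written in the monomial basis, on which [delta a]
   is evaluation at [a]. *)
rewrite -taylor_eval (taylor_recenter p F a (fun _ => 0)).
under eq_bigr => b _ do rewrite shiftmono_origin.
rewrite pairing_sum raddf_sum /=; apply: eq_bigr => b _.
by rewrite pairingZ pairingX mevalZ ffunE.
Qed.

End Pairing.

Section Distance.
Variables (R : realType) (n : nat).
Local Notation pt := (pt R n).

Lemma distRxx (x : pt) : distR x x = 0.
Proof. by rewrite /distR /normR big1 ?sqrtr0 // => i _; rewrite subrr expr0n. Qed.

Lemma distR_ge0 (x y : pt) : 0 <= distR x y.
Proof. exact: sqrtr_ge0. Qed.

Lemma distRC (x y : pt) : distR x y = distR y x.
Proof. by rewrite /distR /normR; congr Num.sqrt; apply: eq_bigr => i _; rewrite -sqrrN opprB. Qed.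

Lemma distR_eq0 (x y : pt) : distR x y = 0 -> x = y.
Proof.
move=> /eqP; rewrite sqrtr_eq0 => le_sum0.
have /eqP : \sum_i (x i - y i) ^+ 2 = 0.
  by apply/eqP; rewrite eq_le le_sum0 sumr_ge0 // => i _; apply: sqr_ge0.
rewrite psumr_eq0 => [/allP xy|i _]; last exact: sqr_ge0.
apply: boolp.funext => i.
by apply/eqP; rewrite -subr_eq0 -sqrf_eq0; apply: xy (mem_index_enum i).
Qed.

End Distance.

Section WhitneyEstimates.
Variables (R : realType) (n p : nat) (F : Fjet R n).
Local Notation midx := (midx n p).
Local Notation mpR := {mpoly R[n]}.
Local Notation dual := (dual R n p).
Local Notation pt := (pt R n).
Local Notation T a := (taylor p F a).

Lemma pairing_taylorB_le (z : dual) (x y : pt) (B : R) : 0 <= B ->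
  (x <> y -> forall a : midx, `|whitney_delta F a x y| <= B) ->
  `|pairing z (T y) - pairing z (T x)| <=
    B * \sum_(a : midx) distR x y ^+ (p - mdeg (val a)) * `|xi_at z a y|.
Proof.
move=> B_ge0 delta_le; have [/distR_eq0 <-|dxy] := eqVneq (distR x y) 0.
  rewrite subrr normr0 mulr_ge0 // sumr_ge0 // => a _.
  by rewrite mulr_ge0 ?exprn_ge0 ?distR_ge0.
have xy : x <> y by move=> exy; move: dxy; rewrite exy distRxx eqxx.
rewrite pairing_taylorB mulr_sumr; apply: le_trans (ler_norm_sum _ _ _) _.
apply: ler_sum => a _.
rewrite -(divfK (expf_neq0 (p - mdeg (val a)) dxy) (F _ y - _)) -whitney_deltaE.
rewrite 2!normrM (ger0_norm (exprn_ge0 _ (distR_ge0 _ _))) mulrA.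
by rewrite ler_wpM2r ?ler_wpM2r ?exprn_ge0 ?distR_ge0 ?delta_le.
Qed.

Lemma pairing_dual_le (xi z : dual) (P : mpR) (e : R) : (forall m, `|xi m - z m| <= e) ->
  `|pairing xi P - pairing z P| <= e * \sum_(m : midx) `|P@_(val m)|.
Proof.
move=> xi_z; rewrite /pairing -sumrB mulr_sumr; apply: le_trans (ler_norm_sum _ _ _) _.
by apply: ler_sum => m _; rewrite -mulrBl normrM ler_wpM2r.
Qed.

Lemma xi_at_le (xi z : dual) (a : midx) (b : pt) : (forall m, `|z m - xi m| <= 1) ->
  `|xi_at z a b| <= \sum_(m : midx)
     (`|xi m| + 1) * `|((mfact R (val a))^-1 *: shiftmono b (val a))@_(val m)|.
Proof.
move=> z_xi; rewrite /xi_at /pairing; apply: le_trans (ler_norm_sum _ _ _) _.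
apply: ler_sum => m _; rewrite normrM ler_wpM2r //.
by rewrite -[z m](subrK (xi m)) (le_trans (ler_normD _ _)) // addrC lerD2l.
Qed.

Variable X : pt -> Prop.
Hypothesis hw : whitney_field p X F.

Lemma whitney_field_unif (c : pt) (e : R) : X c -> 0 < e ->
  exists2 del, 0 < del & forall a b, X a -> X b -> a <> b -> distR a c < del ->
    distR b c < del -> forall m : midx, `|whitney_delta F m a b| < e.
Proof.
move=> hc he.
suff [del del_gt0 hdel] : exists2 del, 0 < del & forall m, m \in enum {: midx} -> forall a b,
    X a -> X b -> a <> b -> distR a c < del -> distR b c < del -> `|whitney_delta F m a b| < e.
  by exists del => // a b ha hb ab ac bc m; apply: hdel; rewrite ?mem_enum.
elim: (enum _) => [|m s [d d_gt0 ihs]]; first by exists 1.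
have [d' [d'_gt0 hm]] := hw hc m he.
exists (Num.min d d'); first by rewrite lt_min d_gt0 d'_gt0.
move=> m'; rewrite inE => /predU1P [-> | m's] a b ha hb ab;
  rewrite !lt_min => /andP [ac ac'] /andP [bc bc'].
  exact: hm.
exact: ihs.
Qed.

Lemma pairing_taylor_near (a : pt) (xi : dual) (e : R) : X a -> 0 < e ->
  exists2 del, 0 < del & forall a' b' (xi' eta' : dual), X a' -> X b' ->
    nearcond a' b' eta' -> distR a a' < del -> distR a b' < del ->
    (forall m, `|xi m - (xi' + eta') m| < del) ->
    `|pairing xi (T a) - (pairing xi' (T a') + pairing eta' (T b'))| < e.
Proof.
move=> ha e_gt0.
pose C := \sum_(m : midx) `|(T a)@_(val m)|.
pose K := \sum_(al : midx) \sum_(m : midx)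
  (`|xi m| + 1) * `|((mfact R (val al))^-1 *: shiftmono a (val al))@_(val m)|.
pose M := \sum_(al : midx) (1 : R).
have C_ge0 : 0 <= C by rewrite sumr_ge0.
have K_ge0 : 0 <= K by rewrite !sumr_ge0 // => al _; rewrite sumr_ge0 // => m _; rewrite mulr_ge0 ?addr_ge0.
have M_ge0 : 0 <= M by rewrite sumr_ge0.
pose e0 := e / (C + K + M + 1).
have S_gt0 : 0 < C + K + M + 1 by lra.
have e0_gt0 : 0 < e0 by rewrite divr_gt0.
have e0S : e0 * C + e0 * K + e0 * M < e.
  by rewrite -[ltRHS](divfK (lt0r_neq0 S_gt0)) -/e0 !mulrDr mulr1 ltrDl.
have [dW dW_gt0 hW] := whitney_field_unif ha e0_gt0.
exists (Num.min (Num.min e0 1) dW); first by rewrite !lt_min e0_gt0 dW_gt0 ltr01.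
move=> a' b' xi' eta' ha' hb' near_b'; rewrite !lt_min.
move=> /andP [/andP [_ aa'1] aa'W] /andP [_ ab'W] hz.
set z := xi' + eta'.
have z_e0 m : `|xi m - z m| <= e0 by have := hz m; rewrite !lt_min => /andP [/andP [/ltW]].
have z_1 m : `|z m - xi m| <= 1 by have := hz m; rewrite distrC !lt_min => /andP [/andP [_ /ltW]].
have -> : pairing xi (T a) - (pairing xi' (T a') + pairing eta' (T b')) =
    (pairing xi (T a) - pairing z (T a)) + (pairing z (T a) - pairing z (T a'))
    - (pairing eta' (T b') - pairing eta' (T a')).
  by rewrite /z !pairingDl; ring.
have b1 : `|pairing xi (T a) - pairing z (T a)| <= e0 * C by apply: pairing_dual_le.
have b2 : `|pairing z (T a) - pairing z (T a')| <= e0 * K.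
  apply: le_trans (pairing_taylorB_le z (ltW e0_gt0) _) _.
    by move=> a'a al; apply/ltW/hW => //; rewrite ?distRxx // distRC.
  rewrite ler_wpM2l ?(ltW e0_gt0) // ler_sum // => al _.
  rewrite -[leRHS]mul1r ler_pM ?exprn_ge0 ?distR_ge0 ?xi_at_le //.
  by rewrite exprn_ile1 ?distR_ge0 // distRC ltW.
have b3 : `|pairing eta' (T b') - pairing eta' (T a')| <= e0 * M.
  apply: le_trans (pairing_taylorB_le eta' (ltW e0_gt0) _) _.
    by move=> a'b' al; apply/ltW/hW => //; rewrite distRC.
  by rewrite ler_wpM2l ?(ltW e0_gt0) // ler_sum.
apply: le_lt_trans (ler_normB _ _) _.
apply: le_lt_trans (lerD (ler_normD _ _) (lexx _)) _.
lra.
Qed.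

End WhitneyEstimates.

Lemma eq_normB_lt (K : numFieldType) (w q : K) : (forall e, 0 < e -> `|w - q| < e) -> w = q.
Proof.
move=> wq; apply/eqP; rewrite -subr_eq0 -normr_eq0 eq_le normr_ge0 andbT.
by apply/ler_addgt0Pr => e e_gt0; rewrite add0r ltW ?wq.
Qed.

Section TaylorGraph.
Variables (R : realType) (n p : nat) (X : pt R n -> Prop) (F : Fjet R n).
Local Notation T a := (taylor p F a).

Definition taylor_graph (E : bundleE R n p) (Phi : bundlePhi R n p) : Prop :=
  (forall a xi l, Phi a xi l -> E a xi /\ l = pairing xi (T a)) /\
  (forall a xi, E a xi -> Phi a xi (pairing xi (T a))).

Lemma taylor_graph0 (f : pt R n -> R) : (forall a, X a -> F 0%MM a = f a) ->
  taylor_graph (E0 X) (Phi0 X f).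
Proof.
move=> hF; split.
  move=> a xi t [ha [l [xiE ->]]]; split; first by split => //; exists l.
  by rewrite (pairingZl _ xiE) pairing_delta_taylor hF.
move=> a xi [ha [l xiE]]; split => //; exists l; split => //.
by rewrite (pairingZl _ xiE) pairing_delta_taylor hF.
Qed.

Lemma taylor_graph_span (E : bundleE R n p) (Phi : bundlePhi R n p) :
  taylor_graph E Phi ->
  taylor_graph (fun a xi => X a /\ Defs.span (E a) xi) (fun a xi l => X a /\ Defs.spanP (Phi a) xi l).
Proof.
move=> [graphPhi graphE]; split.
  move=> a xi l [ha [k [v [w [c [hv [xiE ->]]]]]]]; split.
    by split => //; exists k, v, c; split => // i; have [] := graphPhi _ _ _ (hv i).
  rewrite (pairing_lincombl _ xiE); apply: eq_bigr => i _.
  by have [_ ->] := graphPhi _ _ _ (hv i).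
move=> a xi [ha [k [v [c [hv xiE]]]]]; split => //.
exists k, v, (fun i => pairing (v i) (T a)), c; split; first by move=> i; apply: graphE.
by rewrite (pairing_lincombl _ xiE).
Qed.

Hypothesis hw : whitney_field p X F.

Lemma Phiprime_taylor (E : bundleE R n p) (Phi : bundlePhi R n p) :
  taylor_graph E Phi -> forall a xi l, Phiprime X Phi a xi l ->
  Eprime X E a xi /\ l = pairing xi (T a).
Proof.
move=> [graphPhi _] a xi l [ha [_ close]]; split.
  split => //; split => // eps eps_gt0.
  have [a' [b' [z' [t' [[ha' [hb' [xi' [l' [eta' [mu' Delta_t']]]]]] near_t']]]]] :=
    close eps eps_gt0.
  case: Delta_t' => /graphPhi [Exi' _] [/graphPhi [Eeta' _] [near_b' [zE _]]].
  exists a', b', z'; split; first by split => //; split => //; exists xi', eta'.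
  by case: near_t' => d1 [d2 [zm _]].
apply: eq_normB_lt => e e_gt0.
have e2_gt0 : 0 < e / 2 by rewrite divr_gt0.
have [del del_gt0 near] := pairing_taylor_near hw xi ha e2_gt0.
have min_gt0 : 0 < Num.min del (e / 2) by rewrite lt_min del_gt0 e2_gt0.
have [a' [b' [z' [t' [[ha' [hb' [xi' [l' [eta' [mu' Delta_t']]]]]] near_t']]]]] :=
  close _ min_gt0.
case: Delta_t' => /graphPhi [_ l'E] [/graphPhi [_ mu'E] [near_b' [zE tE]]].
rewrite tE l'E mu'E !lt_min in near_t'; case: near_t' => /andP [d1 _] [/andP [d2 _] [zm /andP [_ lt]]].
have zm' m : `|xi m - (xi' + eta') m| < del.
  by have := zm m; rewrite zE lt_min => /andP [].
have := near a' b' xi' eta' ha' hb' near_b' d1 d2 zm'.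
have := ler_distD (pairing xi' (T a') + pairing eta' (T b')) l (pairing xi (T a)).
rewrite (distrC (_ + _) (pairing xi (T a))); lra.
Qed.

Lemma Eprime_taylor (E : bundleE R n p) (Phi : bundlePhi R n p) :
  taylor_graph E Phi -> forall a xi, Eprime X E a xi -> Phiprime X Phi a xi (pairing xi (T a)).
Proof.
move=> [_ graphE] a xi [ha [_ close]]; split => //; split => // eps eps_gt0.
have [del del_gt0 near] := pairing_taylor_near hw xi ha eps_gt0.
have min_gt0 : 0 < Num.min del eps by rewrite lt_min del_gt0 eps_gt0.
have [a' [b' [z' [[ha' [hb' [xi' [eta' [Exi' [Eeta' [near_b' zE]]]]]]] [d1 [d2 zm]]]]]] :=
  close _ min_gt0.
rewrite !lt_min in d1 d2; case/andP: d1 => d1 d1'; case/andP: d2 => d2 d2'.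
have zm' m : `|xi m - z' m| < del /\ `|xi m - z' m| < eps by apply/andP; rewrite -lt_min.
exists a', b', z', (pairing xi' (T a') + pairing eta' (T b')); split.
  split => //; split => //; exists xi', (pairing xi' (T a')), eta', (pairing eta' (T b')).
  by do !split => //; apply: graphE.
do 2!split => //; split => [m|]; first by case: (zm' m).
by apply: near => // m; rewrite -zE; case: (zm' m).
Qed.

Lemma taylor_graph_rho (E : bundleE R n p) (Phi : bundlePhi R n p) :
  taylor_graph E Phi -> taylor_graph (rhoE X E) (rhoPhi X Phi).
Proof.
move=> graph; apply: taylor_graph_span; split.
  exact: Phiprime_taylor.
exact: Eprime_taylor.
Qed.

Lemma taylor_graph_iter (f : pt R n -> R) (i : nat) : (forall a, X a -> F 0%MM a = f a) ->
  taylor_graph (iter i (rhoE X) (E0 X)) (iter i (rhoPhi X) (Phi0 X f)).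
Proof.
move=> hF; elim: i => [|i graph_i]; first exact: taylor_graph0.
exact: taylor_graph_rho.
Qed.

End TaylorGraph.

Theorem lemma4p17 (R : realType) (n p : nat) (U X : pt R n -> Prop)
  (f : pt R n -> R) (F : Fjet R n) :
  is_openR U -> (forall x, X x -> U x) -> rel_closedR U X ->
  whitney_field p X F -> (forall a, X a -> F 0%MM a = f a) ->
  forall i : nat,
    (forall a xi l, iter i (@rhoPhi R n p X) (@Phi0 R n p X f) a xi l ->
        iter i (@rhoE R n p X) (@E0 R n p X) a xi) /\
    (forall a (xi : dual R n p), X a -> iter i (@rhoE R n p X) (@E0 R n p X) a xi ->
        (exists! l, iter i (@rhoPhi R n p X) (@Phi0 R n p X f) a xi l) /\
        forall l, iter i (@rhoPhi R n p X) (@Phi0 R n p X f) a xi l -> l = pairing xi (taylor p F a)).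
Proof.
move=> _ _ _ hw hF i.
have [graphPhi graphE] := taylor_graph_iter hw i hF.
split => [a xi l /graphPhi [] // | a xi _ /graphE Phi_xi].
split => [|l /graphPhi [_ ->] //].
by exists (pairing xi (taylor p F a)); split => // l /graphPhi [_ ->].
Qed.
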